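(* Let $\mathcal{X} \subseteq \mathbb{R}^d$ and $\mathcal{Y} = \{1,\dots,c\}$. Let $\hat{p}^r(\bm{x},\hat{y})$ be a (real) joint distribution of data and clean labels, and let the observed noisy labels arise by class-dependent corruption independent of $\bm{x}$: with transition matrix $T=(T_{i,j}) \in [0,1]^{c\times c}$, $T_{i,j} = p(\tilde{y}=j \mid \hat{y}=i)$, the real noisy joint distribution is $\tilde{p}^r(\bm{x},\tilde{y}) = \sum_{\hat{y}} T_{\hat{y},\tilde{y}}\, \hat{p}^r(\bm{x},\hat{y})$. Let $G$ be a conditional generator mapping $(\bm{z},\hat{y}^g)$, with $\bm{z}\sim p(\bm{z})$ and $\hat{y}^g \sim p(\hat{y})$, to $G(\bm{z},\hat{y}^g)$; let $\hat{p}^g(\bm{x},\hat{y})$ be the joint distribution of $(G(\bm{z},\hat{y}^g),\hat{y}^g)$, and let $\tilde{p}^g(\bm{x},\tilde{y}) = \sum_{\hat{y}} T_{\hat{y},\tilde{y}}\, \hat{p}^g(\bm{x},\hat{y})$ be the joint distribution of $(G(\bm{z},\hat{y}^g),\tilde{y}^g)$ where $\tilde{y}^g \sim p(\tilde{y}\mid \hat{y}^g)$. Consider the objective $$\mathcal{L}_{\mathrm{rcGAN}}(G,D) = \mathbb{E}_{(\bm{x}^r,\tilde{y}^r)\sim \tilde{p}^r}[\log D(\bm{x}^r,\tilde{y}^r)] + \mathbb{E}_{\bm{z}\sim p(\bm{z}),\,\hat{y}^g\sim p(\hat{y}),\,\tilde{y}^g\sim p(\tilde{y}\mid\hat{y}^g)}[\log(1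 - D(G(\bm{z},\hat{y}^g),\tilde{y}^g))],$$ where the discriminator $D:\mathcal{X}\times\mathcal{Y}\to(0,1)$ maximizes and the generator $G$ minimizes, and call $G$ optimal if it attains the global minimum over generators of $\max_D \mathcal{L}_{\mathrm{rcGAN}}(G,D)$. If $T$ is nonsingular, then $G$ is optimal if and only if $\hat{p}^g(\bm{x},\hat{y}) = \hat{p}^r(\bm{x},\hat{y})$.
   Context: This is the setting of a label-noise robust conditional GAN (rcGAN): only noisy labels $\tilde{y}$ are observed for real data, the clean label $\hat{y}$ is unobserved, and the generator is conditioned on a clean label $\hat{y}^g$ which is passed through the known noise transition model $p(\tilde{y}\mid\hat{y})$ before being given to the discriminator. Optimality is understood in the sense of the original GAN analysis (optimal discriminator for fixed generator, then minimization over generators). *)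

From HB Require Import structures.
From mathcomp Require Import all_boot all_order all_algebra.
From mathcomp Require Import all_classical all_reals all_analysis.
Set Implicit Arguments. Unset Strict Implicit. Unset Printing Implicit Defensive.
Import Order.TTheory GRing.Theory Num.Theory.
Local Open Scope classical_set_scope.
Local Open Scope ring_scope.

(* Labels Y = {1,...,c} are represented by 'I_c.
   A joint distribution p(x, y) on X x Y is represented by the family of
   (sub-probability) measures (A |-> P(x \in A, y = i))_i. *)

Definition transition_matrix (R : realType) (c : nat) (T : 'M[R]_c) : Prop :=
  (forall i j, 0 <= T i j <= 1) /\ (forall i, \sum_(j < c) T i j = 1).

Definition discriminator (d : measure_display) (X : measurableType d)
  (R : realType) (c : nat) (D : X -> 'I_c -> R) : Prop :=
  (forall j, measurable_fun setT (fun x => D x j)) /\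
  (forall x j, 0 < D x j < 1).

Definition label_prior (d : measure_display) (X : measurableType d)
  (R : realType) (c : nat) (mu : 'I_c -> {measure set X -> \bar R}) (i : 'I_c) : R :=
  fine (mu i setT).

(* The generator is identified (nonparametrically) with the
   conditional laws g i of G(z, i), z ~ p(z). *)
Definition rcGAN_obj (d : measure_display) (X : measurableType d)
  (R : realType) (c : nat) (T : 'M[R]_c)
  (mu nu : 'I_c -> {measure set X -> \bar R})
  (g : 'I_c -> probability X R) (D : X -> 'I_c -> R) : \bar R :=
  ((\sum_(j < c) \int[nu j]_x (ln (D x j))%:E) +
   (\sum_(i < c) \sum_(j < c)
       ((label_prior mu i * T i j)%:E * \int[g i]_x (ln (1 - D x j))%:E)))%E.

Definition rcGAN_value (d : measure_display) (X : measurableType d)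
  (R : realType) (c : nat) (T : 'M[R]_c)
  (mu nu : 'I_c -> {measure set X -> \bar R})
  (g : 'I_c -> probability X R) : \bar R :=
  ereal_sup [set rcGAN_obj T mu nu g D | D in [set D | discriminator D]].

Definition optimal_generator (d : measure_display) (X : measurableType d)
  (R : realType) (c : nat) (T : 'M[R]_c)
  (mu nu : 'I_c -> {measure set X -> \bar R})
  (g : 'I_c -> probability X R) : Prop :=
  forall g' : 'I_c -> probability X R,
    (rcGAN_value T mu nu g <= rcGAN_value T mu nu g')%E.

From HB Require Import structures.
From mathcomp Require Import all_boot all_order all_algebra.
From mathcomp Require Import all_classical all_reals all_analysis.
From mathcomp Require Import measurable_realfun lebesgue_integral_nonneg.
From mathcomp Require Import ring lra.
Set Implicit Arguments. Unset Strict Implicit. Unset Printing Implicit Defensive.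
Import Order.TTheory GRing.Theory Num.Theory.
Local Open Scope classical_set_scope.
Local Open Scope ring_scope.

(* Rather than computing the optimal discriminator, compare max_D L(G, D) with
   2 ln(1/2) directly.  With the noisy generated law
   q^g_j := sum_i p(i) T_ij G_i, the objective is
   sum_j (int ln D_j d(p~^r_j) + int ln (1 - D_j) d(q^g_j)).
   - The constant discriminator 1/2 gives 2 ln(1/2) for every G.
   - If q^g = p~^r, the pointwise bound ln D + ln (1 - D) <= 2 ln(1/2) caps the
     value at 2 ln(1/2); normalising each class of the clean joint p^r yields
     such a G.
   - If q^g_j(A) <> p~^r_j(A), the discriminator equal to (1 + t)/2 on A x {j}
     and 1/2 elsewhere exceeds 2 ln(1/2), because a ln(1 + t) + b ln(1 - t) > 0
     for a suitable t whenever a <> b.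
   As T is invertible, q^g = p~^r on A forces p(i) G_i(A) = p^r_i(A). *)

Section integral_facts.
Local Open Scope ereal_scope.
Context d (X : measurableType d) (R : realType).
Implicit Types (m : {measure set X -> \bar R}) (f h : X -> \bar R).

Lemma fin_num_measure_setT m A : measurable A -> m setT \is a fin_num ->
  m A \is a fin_num.
Proof.
move=> mA; rewrite !ge0_fin_numE//; apply: le_lt_trans.
by rewrite le_measure ?inE.
Qed.

Lemma fine_measure_add_setC m A : measurable A -> m setT \is a fin_num ->
  (fine (m A) + fine (m (~` A)) = fine (m setT))%R.
Proof.
move=> mA mT; have mAC := measurableC mA.
rewrite -(setUv A) measureU ?setICr// fineD//.
- exact: fin_num_measure_setT.
- exact: fin_num_measure_setT.
Qed.

Lemma integral_if_cst m A (u v : R) : measurable A ->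
  \int[m]_x (if x \in A then u else v)%:E = u%:E * m A + v%:E * m (~` A).
Proof.
move=> mA; have mAC := measurableC mA.
rewrite -[in LHS](setUv A) integral_setU//; last 2 first.
- rewrite setUv (_ : (fun x => _) = (fun x => (v + (u - v) * \1_A x)%:E)).
    by apply/measurable_EFinP/measurable_funD/measurable_funM/measurable_indic.
  apply/funext => x; rewrite indicE.
  by case: (x \in A); rewrite /= ?mulr0 ?addr0// mulr1 addrC subrK.
- by rewrite disj_set2E setICr.
rewrite -!integral_cst//; congr (_ + _); apply: eq_integral => x.
  by move=> ->.
by rewrite in_setC => /negbTE ->.
Qed.

Lemma le0_integralE m f : (forall x, f x <= 0) ->
  \int[m]_x f x = - \int[m]_x - f x.
Proof.
move=> f0; rewrite -integral_ge0N => [|x _]; last by rewrite oppe_ge0.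
by apply: eq_integral => x _; rewrite oppeK.
Qed.

Lemma le0_integralD m f h : (forall x, f x <= 0) -> (forall x, h x <= 0) ->
  measurable_fun setT f -> measurable_fun setT h ->
  \int[m]_x (f x + h x) = \int[m]_x f x + \int[m]_x h x.
Proof.
move=> f0 h0 mf mh.
have fh_def x : f x +? h x by rewrite -adde_defNN ge0_adde_def// inE oppe_ge0.
have fh0 x : f x + h x <= 0 by rewrite -[0]adde0 leeD.
rewrite (le0_integralE _ fh0) (le0_integralE _ f0) (le0_integralE _ h0).
rewrite -oppeD; last first.
  by rewrite ge0_adde_def// inE integral_ge0// => x _; rewrite oppe_ge0.
rewrite -ge0_integralD => [||x _||x _|]; rewrite ?oppe_ge0//;
  try exact: measurableT_comp.
by under eq_integral do rewrite oppeD//.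
Qed.

Lemma le0_le_integral m f h : (forall x, h x <= 0) -> (forall x, f x <= h x) ->
  measurable_fun setT f -> measurable_fun setT h ->
  \int[m]_x f x <= \int[m]_x h x.
Proof.
move=> h0 fh mf mh; have f0 x : f x <= 0 := le_trans (fh x) (h0 x).
rewrite (le0_integralE _ f0) (le0_integralE _ h0) leeN2.
apply: ge0_le_integral => //.
- by move=> x _; rewrite oppe_ge0.
- exact: measurableT_comp.
- exact: measurableT_comp.
- by move=> x _; rewrite leeN2.
Qed.

End integral_facts.

Section weighted_msum.
Local Open Scope ereal_scope.
Context d (X : measurableType d) (R : realType) (n : nat).
Variables (ms : 'I_n -> {measure set X -> \bar R}) (w : 'I_n -> {nonneg R}).

Let weighted_seq : {measure set X -> \bar R}^nat := fun k =>
  if insub k is Some i then mscale (w i) (ms i) else mzero.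

Definition weighted_msum : {measure set X -> \bar R} := msum weighted_seq n.

Lemma weighted_msumE A : weighted_msum A = \sum_(i < n) (w i)%:num%:E * ms i A.
Proof. by apply: eq_bigr => i _; rewrite /weighted_seq valK. Qed.

Lemma ge0_integral_weighted_msum (f : X -> \bar R) : (forall x, 0 <= f x) ->
  measurable_fun setT f ->
  \int[weighted_msum]_x f x = \sum_(i < n) (w i)%:num%:E * \int[ms i]_x f x.
Proof.
move=> f0 mf; rewrite ge0_integral_measure_sum//; apply: eq_bigr => i _.
by rewrite /weighted_seq valK ge0_integral_mscale.
Qed.

Lemma le0_integral_weighted_msum (f : X -> \bar R) : (forall x, f x <= 0) ->
  measurable_fun setT f ->
  \int[weighted_msum]_x f x = \sum_(i < n) (w i)%:num%:E * \int[ms i]_x f x.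
Proof.
move=> f0 mf; have Nf0 x : 0 <= - f x by rewrite oppe_ge0.
rewrite le0_integralE// ge0_integral_weighted_msum//; last first.
  exact: measurableT_comp.
rewrite -sumeN => [|i j _ _]; last first.
  by rewrite ge0_adde_def// inE mule_ge0// integral_ge0.
by apply: eq_bigr => i _; rewrite [in RHS]le0_integralE// muleN.
Qed.

End weighted_msum.

Lemma ln1Dx_ge_div (R : realType) (t : R) : -1 < t -> t / (1 + t) <= ln (1 + t).
Proof.
move=> t1; have t1_gt0 : 0 < 1 + t by lra.
have := @le_ln1Dx R (- (t / (1 + t))).
have -> : 1 + - (t / (1 + t)) = (1 + t)^-1 by field; rewrite gt_eqF.
rewrite lnV ?posrE// lerN2; apply.
by rewrite ltrN2 ltr_pdivrMr//; lra.
Qed.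

Lemma ln_add_ln1B_le (R : realType) (x : R) : 0 < x < 1 ->
  ln x + ln (1 - x) <= 2 * ln 2^-1.
Proof.
move=> /andP[x0 x1].
rewrite -lnM ?posrE ?subr_gt0// mulr_natl mulr2n -lnM ?posrE ?invr_gt0//.
rewrite ler_ln ?posrE ?mulr_gt0 ?subr_gt0 ?invr_gt0//.
rewrite -subr_ge0 (_ : _ - _ = (x - 2^-1) ^+ 2); first exact: sqr_ge0.
by field.
Qed.

Lemma ln_tilt_ge (R : realType) (a b t : R) : 0 <= a -> 0 <= b -> -1 < t < 1 ->
  t * ((a - b) - t * (a + b)) / (1 - t ^+ 2) <= a * ln (1 + t) + b * ln (1 - t).
Proof.
move=> a0 b0 /andP[t1 t2].
have lnD := ln1Dx_ge_div t1.
have lnB : - t / (1 - t) <= ln (1 - t) by apply: ln1Dx_ge_div; lra.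
apply: le_trans (lerD (ler_wpM2l a0 lnD) (ler_wpM2l b0 lnB)).
rewrite le_eqVlt; apply/orP; left; apply/eqP.
by field; rewrite (_ : 1 - t ^+ 2 = (1 + t) * (1 - t)) 1?mulf_neq0 ?gt_eqF//; lra.
Qed.

(* Half the likelihood-ratio tilt (a - b) / (a + b): it stays in [-1/2, 1/2]
   even when a or b vanishes, and turns the bound of [ln_tilt_ge] into
   (a - b)^2 / (4 (a + b) (1 - t^2)). *)
Lemma exists_ln_tilt_gt0 (R : realType) (a b : R) : 0 <= a -> 0 <= b -> a != b ->
  exists2 t, -1 < t < 1 & 0 < a * ln (1 + t) + b * ln (1 - t).
Proof.
move=> a0 b0 ab; have ab_gt0 : 0 < a + b.
  rewrite lt_neqAle addr_ge0// andbT eq_sym paddr_eq0//.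
  by apply: contra ab => /andP[/eqP-> /eqP->].
pose t := (a - b) / (2 * (a + b)).
have t_scaled : t * (2 * (a + b)) = a - b by rewrite mulfVK// mulf_neq0// gt_eqF.
have t_bnd : -1 < t < 1 by apply/andP; split; nra.
exists t => //; apply: lt_le_trans (ln_tilt_ge a0 b0 t_bnd).
have t2 : 0 < 1 - t ^+ 2 by nra.
have -> : t * ((a - b) - t * (a + b)) = (a - b) ^+ 2 / (4 * (a + b)).
  by rewrite /t; field; rewrite gt_eqF.
have ab2 : 0 < (a - b) ^+ 2 by rewrite exprn_even_gt0//= subr_eq0.
by rewrite !divr_gt0// mulr_gt0.
Qed.

Lemma integral_ln_tilt d (X : measurableType d) (R : realType)
  (m : {measure set X -> \bar R}) (A : set X) (s : R) :
  measurable A -> m setT \is a fin_num -> -1 < s ->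
  (\int[m]_x (ln ((1 + s * \1_A x) / 2))%:E =
   (ln 2^-1 * fine (m setT) + ln (1 + s) * fine (m A))%:E)%E.
Proof.
move=> mA mT s1; have mAC := measurableC mA.
under eq_integral => x _.
  rewrite indicE (_ : ln _ = if x \in A then ln (1 + s) + ln 2^-1 else ln 2^-1).
    over.
  by case: (x \in A); rewrite ?mulr1 ?mulr0 ?addr0 ?div1r// lnM ?posrE//; lra.
rewrite integral_if_cst// -(fineK (fin_num_measure_setT mA mT)).
rewrite -(fineK (fin_num_measure_setT mAC mT)) -!EFinM -EFinD.
by rewrite -(fine_measure_add_setC mA mT); congr EFin; ring.
Qed.

Section rcGAN.
Local Open Scope ereal_scope.
Context d (X : measurableType d) (R : realType) (c : nat) (T : 'M[R]_c)
  (mu nu : 'I_c -> {measure set X -> \bar R}).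
Hypotheses (T_stoch : transition_matrix T)
  (mu_mass1 : \sum_(i < c) mu i setT = 1)
  (nuE : forall j (A : set X), measurable A ->
     nu j A = \sum_(i < c) (T i j)%:E * mu i A).

Let pi := label_prior mu.

Let T_ge0 i j : (0 <= T i j)%R.
Proof. by case: T_stoch => T01 _; case/andP: (T01 i j). Qed.

Lemma mu_setTE i : mu i setT = (pi i)%:E.
Proof.
rewrite /pi /label_prior fineK// ge0_fin_numE// (@le_lt_trans _ _ 1) ?ltry//.
by rewrite -mu_mass1 (bigD1 i)//= leeDl// sume_ge0.
Qed.

Lemma pi_ge0 i : (0 <= pi i)%R.
Proof. exact: fine_ge0. Qed.

Let noisy_prior j := (\sum_(i < c) pi i * T i j)%R.

Lemma sum_noisy_prior : (\sum_(j < c) noisy_prior j = 1)%R.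
Proof.
have sum_pi : (\sum_(i < c) pi i = 1)%R.
  apply: EFin_inj; rewrite -sumEFin -mu_mass1.
  by apply: eq_bigr => i _; rewrite mu_setTE.
rewrite exchange_big -[RHS]sum_pi; apply: eq_bigr => i _.
by case: T_stoch => _ sumT; rewrite -mulr_sumr sumT mulr1.
Qed.

Definition noisy_gen (g : 'I_c -> probability X R) j
    : {measure set X -> \bar R} :=
  weighted_msum (fun i => g i : {measure set X -> \bar R})
    (fun i => NngNum (mulr_ge0 (pi_ge0 i) (T_ge0 i j))).

Lemma noisy_genE g j A : noisy_gen g j A = \sum_(i < c) (pi i * T i j)%:E * g i A.
Proof. exact: weighted_msumE. Qed.

Lemma noisy_gen_setTE g j : noisy_gen g j setT = (noisy_prior j)%:E.
Proof.
rewrite noisy_genE -sumEFin; apply: eq_bigr => i _.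
by rewrite probability_setT mule1.
Qed.

Lemma nu_setTE j : nu j setT = (noisy_prior j)%:E.
Proof.
rewrite nuE// -sumEFin; apply: eq_bigr => i _.
by rewrite mu_setTE -EFinM mulrC.
Qed.

Lemma rcGAN_objE g D : discriminator D ->
  rcGAN_obj T mu nu g D = \sum_(j < c) (\int[nu j]_x (ln (D x j))%:E +
     \int[noisy_gen g j]_x (ln (1 - D x j))%:E).
Proof.
case=> mD D01.
rewrite /rcGAN_obj exchange_big -big_split; apply: eq_bigr => j _.
rewrite le0_integral_weighted_msum// => [x|].
- by rewrite lee_fin ln_le0// lerBlDr lerDl; case/andP: (D01 x j) => /ltW.
- apply/measurable_EFinP/measurableT_comp; first exact: measurable_ln.
  exact: measurable_funB.
Qed.

Lemma rcGAN_obj_le g D : discriminator D ->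
  (forall j A, measurable A -> nu j A = noisy_gen g j A) ->
  rcGAN_obj T mu nu g D <= (2 * ln 2^-1)%R%:E.
Proof.
move=> DD nu_gen; have [mD D01] := DD.
have lnD_le0 x j : (ln (D x j))%:E <= 0.
  by rewrite lee_fin; apply: ln_le0; case/andP: (D01 x j) => _ /ltW.
have lnBD_le0 x j : (ln (1 - D x j))%:E <= 0.
  rewrite lee_fin; apply: ln_le0; rewrite lerBlDr lerDl.
  by case/andP: (D01 x j) => /ltW.
have mlnD j : measurable_fun setT (fun x => (ln (D x j))%:E).
  exact/measurable_EFinP/measurableT_comp.
have mlnBD j : measurable_fun setT (fun x => (ln (1 - D x j))%:E).
  exact/measurable_EFinP/measurableT_comp/measurable_funB.
rewrite rcGAN_objE//.
under eq_bigr => j _.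
  rewrite -(eq_measure_integral _ (fun A mA _ => nu_gen j A mA)).
  rewrite -le0_integralD//.
  over.
apply: (@le_trans _ _ (\sum_(j < c) (2 * ln 2^-1 * noisy_prior j)%R%:E)).
  apply: lee_sum => j _; rewrite EFinM -nu_setTE -integral_cst//.
  apply: le0_le_integral => //.
  - by move=> x; rewrite lee_fin pmulr_rle0// ln_le0// invf_le1// ler1n.
  - by move=> x; rewrite -EFinD lee_fin ln_add_ln1B_le.
  - exact: emeasurable_funD.
by rewrite sumEFin -mulr_sumr sum_noisy_prior mulr1.
Qed.

Definition tilt_disc (A : set X) (t : 'I_c -> R) : X -> 'I_c -> R :=
  fun x j => ((1 + t j * \1_A x) / 2)%R.

Lemma tilt_disc_discriminator A t : measurable A -> (forall j, -1 < t j < 1)%R ->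
  discriminator (tilt_disc A t).
Proof.
move=> mA t1; split=> [j|x j].
  apply: measurable_funM => //; apply: measurable_funD => //.
  exact/measurable_funM/measurable_indic.
rewrite /tilt_disc indicE; have /andP[t1l t1r] := t1 j.
by case: (x \in A); rewrite ?mulr1 ?mulr0 ?addr0; apply/andP; split; lra.
Qed.

Lemma rcGAN_obj_tilt g A t : measurable A -> (forall j, -1 < t j < 1)%R ->
  rcGAN_obj T mu nu g (tilt_disc A t) = (2 * ln 2^-1 + \sum_(j < c)
    (fine (nu j A) * ln (1 + t j) + fine (noisy_gen g j A) * ln (1 - t j)))%R%:E.
Proof.
move=> mA t1; rewrite rcGAN_objE; last exact: tilt_disc_discriminator.
have tD j : (-1 < t j)%R by case/andP: (t1 j).
have tB j : (-1 < - t j)%R by case/andP: (t1 j) => _; rewrite ltrN2.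
have nu_fin j : nu j setT \is a fin_num by rewrite nu_setTE.
have gen_fin j : noisy_gen g j setT \is a fin_num by rewrite noisy_gen_setTE.
have lnB j : (fun x => (ln (1 - tilt_disc A t x j))%:E) =
    (fun x => (ln ((1 + - t j * \1_A x) / 2))%:E).
  by apply/funext => x; rewrite /tilt_disc; congr (ln _)%:E; field.
under eq_bigr => j _ do
  rewrite lnB !integral_ln_tilt// nu_setTE noisy_gen_setTE -EFinD.
rewrite sumEFin; congr EFin.
rewrite (eq_bigr (fun j => 2 * ln 2^-1 * noisy_prior j +
  (fine (nu j A) * ln (1 + t j) + fine (noisy_gen g j A) * ln (1 - t j))))%R;
  last by move=> j _ /=; ring.
by rewrite big_split /= -mulr_sumr sum_noisy_prior mulr1.
Qed.

Lemma rcGAN_value_ge g : (2 * ln 2^-1)%R%:E <= rcGAN_value T mu nu g.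
Proof.
have t0 : forall j : 'I_c, (-1 < (fun=> 0 : R) j < 1)%R by rewrite ltrN10 ltr01.
apply: ereal_sup_ubound; exists (tilt_disc set0 (fun=> 0%R)).
  exact: tilt_disc_discriminator.
rewrite rcGAN_obj_tilt// big1 ?addr0// => j _.
by rewrite !(subr0, addr0, ln1, mulr0).
Qed.

Lemma rcGAN_value_gt g j A : measurable A ->
  fine (nu j A) != fine (noisy_gen g j A) ->
  (2 * ln 2^-1)%R%:E < rcGAN_value T mu nu g.
Proof.
move=> mA nu_gen.
have [t0 t0_bnd gain] := exists_ln_tilt_gt0 (fine_ge0 (measure_ge0 (nu j) A))
  (fine_ge0 (measure_ge0 (noisy_gen g j) A)) nu_gen.
pose t k := if k == j then t0 else 0%R.
have t_bnd k : (-1 < t k < 1)%R by rewrite /t; case: eqP; rewrite ?ltrN10 ?ltr01.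
apply: (@lt_le_trans _ _ (rcGAN_obj T mu nu g (tilt_disc A t))); last first.
  apply: ereal_sup_ubound; exists (tilt_disc A t) => //.
  exact: tilt_disc_discriminator.
rewrite rcGAN_obj_tilt// lte_fin ltrDl (bigD1 j)//= big1 ?addr0 /t ?eqxx//.
move=> k /negbTE ->.
by rewrite !(subr0, addr0, ln1, mulr0).
Qed.

Definition matches (g : 'I_c -> probability X R) :=
  forall i A, measurable A -> (pi i)%:E * g i A = mu i A.

Lemma matches_noisy_gen g : matches g ->
  forall j A, measurable A -> nu j A = noisy_gen g j A.
Proof.
move=> gm j A mA; rewrite nuE// noisy_genE; apply: eq_bigr => i _.
by rewrite -gm// muleA -EFinM mulrC.
Qed.

Lemma rcGAN_value_le g : matches g -> rcGAN_value T mu nu g <= (2 * ln 2^-1)%R%:E.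
Proof.
move=> gm; apply: ge_ereal_sup => _ [D DD <-].
exact: rcGAN_obj_le DD (matches_noisy_gen gm).
Qed.

Lemma matches_mnormalize g : matches (fun i => mnormalize (mu i) (g i)).
Proof.
move=> i A mA /=; rewrite /mnormalize; case: ifPn.
  move=> /orP[/eqP mu0|]; last by rewrite mu_setTE.
  have -> : pi i = 0%R by rewrite /pi /label_prior mu0.
  apply/esym/eqP; rewrite mul0e eq_le measure_ge0 andbT -mu0.
  by rewrite le_measure ?inE.
rewrite negb_or mu_setTE eqe => /andP[pi0 _] /=.
by rewrite muleCA -EFinM divff ?mule1.
Qed.

Lemma matches_of_noisy_agree g A : T \in unitmx -> measurable A ->
  (forall j, fine (nu j A) = fine (noisy_gen g j A)) ->
  forall i, (pi i)%:E * g i A = mu i A.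
Proof.
move=> uT mA agree.
have gA i : g i A = (fine (g i A))%:E by rewrite fineK// fin_num_measure.
have muA i : mu i A = (fine (mu i A))%:E.
  by rewrite fineK// (fin_num_measure_setT mA)// mu_setTE.
pose v : 'rV[R]_c := \row_i (fine (mu i A) - pi i * fine (g i A))%R.
have vT0 : v *m T = 0 *m T.
  apply/rowP => j; rewrite mul0mx !mxE.
  have := agree j; rewrite nuE// noisy_genE.
  under eq_bigr do rewrite muA -EFinM.
  under [in X in _ = X -> _]eq_bigr do rewrite gA -EFinM.
  rewrite !sumEFin /= => nu_gen_j.
  rewrite (eq_bigr (fun i =>
    T i j * fine (mu i A) - pi i * T i j * fine (g i A)))%R.
    by rewrite sumrB nu_gen_j subrr.
  by move=> i _; rewrite mxE; ring.
move=> i; have /rowP/(_ i) := row_free_inj (etrans (row_free_unit T) uT) vT0.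
by rewrite !mxE => /eqP; rewrite subr_eq0 => /eqP vi0; rewrite gA muA -EFinM vi0.
Qed.

End rcGAN.

Theorem theorem2 (d : measure_display) (X : measurableType d) (R : realType)
  (c : nat) (T : 'M[R]_c)
  (mu nu : 'I_c -> {measure set X -> \bar R})
  (g : 'I_c -> probability X R) :
  transition_matrix T ->
  (\sum_(i < c) mu i setT = 1)%E ->
  (forall j (A : set X), measurable A ->
      nu j A = (\sum_(i < c) (T i j)%:E * mu i A)%E) ->
  T \in unitmx ->
  (optimal_generator T mu nu g <->
   forall i (A : set X), measurable A ->
     ((label_prior mu i)%:E * g i A)%E = mu i A).
Proof.
move=> T_stoch mu_mass1 nuE uT.
have value_le := rcGAN_value_le T_stoch mu_mass1 nuE.
split=> [opt i A mA | gm g'].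
- apply: (matches_of_noisy_agree (T_stoch:=T_stoch) mu_mass1 nuE uT mA) => j.
  apply/eqP/contraT => /(rcGAN_value_gt mu_mass1 nuE mA).
  have := le_trans (opt _) (value_le _ (matches_mnormalize mu_mass1 g)).
  by rewrite leNgt => /negP.
- exact: le_trans (value_le _ gm) (rcGAN_value_ge T_stoch mu_mass1 nuE g').
Qed.
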